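(* Let $r$ be a parameter and let $eF_r=(e_{n,k})_{n,k\ge0}$ be the $f$-matrix of the exponential Riordan array $\left[e^x, x(1+rx/2)\right]$, i.e. $eF_r=\left[e^x,x(1+rx/2)\right]\cdot\left[e^x,x\right]=\left[e^{2x+rx^2/2},x(1+rx/2)\right]$. Then the ordinary generating function (in $x$ and $y$) of the reversal of $eF_r$, $$\sum_{n\ge0}\sum_{k=0}^n e_{n,n-k}\,x^ny^k,$$ is given by the continued fraction $$\cfrac{1}{1-(2y+1)x- \cfrac{ry(y+1)x^2}{1-(2y+1)x- \cfrac{2ry(y+1)x^2}{1-(2y+1)x- \cfrac{3ry(y+1)x^2}{1-\cdots}}}},$$ that is, the Jacobi continued fraction whose $n$-th level has linear coefficient $2y+1$ and whose $n$-th quadratic coefficient is $n\,ry(y+1)$ ($n=1,2,3,\ldots$).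
   Context: An exponential Riordan array $[g(x),f(x)]$, where $g(x)=1+g_1\frac{x}{1!}+g_2\frac{x^2}{2!}+\cdots$ and $f(x)=\frac{x}{1!}+f_2\frac{x^2}{2!}+\cdots$, is the lower-triangular matrix $(a_{n,k})_{n,k\ge0}$ with $a_{n,k}=\frac{n!}{k!}[x^n]g(x)f(x)^k$; equivalently its bivariate generating function $\sum_{n,k}a_{n,k}\frac{x^n}{n!}y^k$ equals $g(x)e^{yf(x)}$. Products are matrix products; $[e^x,x]$ is the binomial matrix $\left(\binom{n}{k}\right)$. The $f$-matrix of a Pascal-like matrix $M$ is $M\cdot[e^x,x]$. The reversal of a lower-triangular matrix $(a_{n,k})$ has $(n,k)$ entry $a_{n,n-k}$ for $0\le k\le n$. A Jacobi continued fraction $\mathcal{J}(\alpha_1,\alpha_2,\ldots;\beta_1,\beta_2,\ldots)$ denotes the formal power series $\cfrac{1}{1-\alpha_1x-\cfrac{\beta_1x^2}{1-\alpha_2x-\cfrac{\beta_2x^2}{1-\cdots}}}$. *)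

From mathcomp Require Import all_boot all_order all_algebra.
Set Implicit Arguments. Unset Strict Implicit. Unset Printing Implicit Defensive.
Import GRing.Theory.
Local Open Scope ring_scope.

(* Formal power series in x over a commutative ring S, given by their
   coefficient sequences: a n = [x^n] a. *)
Section FPS.
Variable S : comRingType.

Definition sone : nat -> S := fun n => (n == 0)%:R.
Definition szero : nat -> S := fun _ => 0.
Definition sadd (a b : nat -> S) : nat -> S := fun n => a n + b n.
Definition sopp (a : nat -> S) : nat -> S := fun n => - a n.
Definition sscale (c : S) (a : nat -> S) : nat -> S := fun n => c * a n.
Definition smul (a b : nat -> S) : nat -> S :=
  fun n => \sum_(i < n.+1) a i * b (n - i)%N.
Definition sX (a : nat -> S) : nat -> S :=
  fun n => if n is n'.+1 then a n' else 0.
Definition spow (a : nat -> S) (k : nat) : nat -> S := iter k (smul a) sone.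

(* Coefficients b_0..b_n of the multiplicative inverse 1/a of a series with
   constant term a_0 = 1:  b_0 = 1, b_n = - sum_{i=1}^n a_i b_{n-i}. *)
Fixpoint sinv_upto (a : nat -> S) (n : nat) : seq S :=
  match n with
  | 0 => [:: 1]
  | n'.+1 => let s := sinv_upto a n' in
             rcons s (- \sum_(i < n'.+1) a i.+1 * nth 0 s (n' - i)%N)
  end.
Definition sinv (a : nat -> S) : nat -> S := fun n => nth 0 (sinv_upto a n) n.

(* Finite truncations of the Jacobi continued fraction
   J(alpha_1, alpha_2, ...; beta_1, beta_2, ...):
   jfrac_tail m k = 1/(1 - alpha_k x - beta_k x^2 /(1 - ... /(1 - alpha_{k+m-1} x))),
   with m levels, jfrac_tail 0 k = 0. *)
Fixpoint jfrac_tail (alpha beta : nat -> S) (m k : nat) : nat -> S :=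
  match m with
  | 0 => szero
  | m'.+1 =>
      sinv (sadd sone
              (sopp (sadd (sX (sscale (alpha k) sone))
                          (sX (sX (sscale (beta k) (jfrac_tail alpha beta m' k.+1)))))))
  end.
Definition jfrac_conv (alpha beta : nat -> S) (m : nat) : nat -> S :=
  jfrac_tail alpha beta m 1.

(* The formal power series F equals the (infinite) Jacobi continued fraction
   J(alpha_1,...; beta_1,...) : F is the x-adic limit of the convergents,
   i.e. each coefficient of the convergents is eventually equal to that of F. *)
Definition is_Jfrac (alpha beta : nat -> S) (F : nat -> S) : Prop :=
  forall n, exists M, forall m, (M <= m)%N -> jfrac_conv alpha beta m n = F n.
End FPS.

(* Exponential Riordan arrays over a field R (of characteristic 0):
   g, f are given by their ordinary coefficient sequences.
   [g, f]_{n,k} = n!/k! [x^n] g(x) f(x)^k. *)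
Section Riordan.
Variable R : fieldType.

Definition eriordan (g f : nat -> R) (n k : nat) : R :=
  (n`!)%:R / (k`!)%:R * smul g (spow f k) n.

Definition sexp : nat -> R := fun i => ((i`!)%:R)^-1.
Definition sx : nat -> R := fun i => (i == 1)%:R.
Definition sxr (r : R) : nat -> R :=
  fun i => if i == 1 then 1 else if i == 2 then r / 2%:R else 0.

(* The f-matrix eF_r = [e^x, x(1+rx/2)] . [e^x, x]  (matrix product of lower
   triangular matrices; the terms with j > n vanish). *)
Definition eF (r : R) (n k : nat) : R :=
  \sum_(j < n.+1) eriordan sexp (sxr r) n j * eriordan sexp sx j k.

(* Ordinary generating function of the reversal of eF_r, as a power series
   in x with coefficients in R[y]:  [x^n] = sum_{k=0}^n e_{n,n-k} y^k. *)
Definition rev_eF_gf (r : R) : nat -> {poly R} :=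
  fun n => \sum_(k < n.+1) (eF r n (n - k)%N)%:P * 'X^k.
End Riordan.

(* Reversing the product with Pascal's matrix, row n of the reversal of eF_r is
   sum_j [e^x, x + r x^2/2]_{n,j} (y+1)^j y^(n-j).  Grouping its terms by powers of
   r and using y + (y+1) = 2y+1 gives H_n = sum_i n!/(i! (n-2i)! 2^i) b^i a^(n-2i)
   with a = 2y+1 and b = r y(y+1), i.e. H_n = n! [x^n] exp(a x + b x^2/2); hence
   H_(n+1) = a H_n + n b H_(n-1).  The triangle T(n,k) = C(n,k) H_(n-k) then obeys
   the Motzkin-path recurrence T(n+1,k) = T(n,k-1) + a T(n,k) + (k+1) b T(n,k+1),
   and by Flajolet's theorem the generating function of its first column T(n,0) = H_n
   is the J-fraction with alpha_k = a and beta_k = k b. *)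

From mathcomp Require Import all_boot all_order all_algebra.
From Stdlib Require Import FunctionalExtensionality.
From mathcomp Require Import zify ring.
Set Implicit Arguments.
Unset Strict Implicit.
Unset Printing Implicit Defensive.
Import GRing.Theory.
Local Open Scope ring_scope.

Lemma big_ord_leq_shift (V : zmodType) (G : nat -> V) (j N : nat) : (j <= N)%N ->
  \sum_(i < N) (if (j <= i)%N then G i else 0) = \sum_(l < N - j) G (j + l)%N.
Proof.
move=> jN; rewrite -(big_mkord xpredT (fun i => if (j <= i)%N then G i else 0)).
rewrite (@big_cat_nat _ _ _ j 0 N _ _ (leq0n j) jN) /= big_nat_cond big1 ?add0r.
  by rewrite -{1}(add0n j) big_addn big_mkord; apply: eq_bigr => i _; rewrite leq_addl addnC.
by move=> i /andP[/andP[_ ij] _]; rewrite leqNgt ij.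
Qed.

Section PowerSeries.
Variable S : comRingType.
Implicit Types a b c : nat -> S.

Lemma smulC a b : smul a b = smul b a.
Proof.
apply: functional_extensionality => n; rewrite /smul (reindex_inj rev_ord_inj) /=.
by apply: eq_bigr => i _; rewrite subSS mulrC subKn // -ltnS.
Qed.

Lemma smulA a b c : smul (smul a b) c = smul a (smul b c).
Proof.
apply: functional_extensionality => n; rewrite /smul.
transitivity (\sum_(j < n.+1) \sum_(i < n.+1)
   (if (j <= i)%N then a j * (b (i - j)%N * c (n - i)%N) else 0)).
  rewrite exchange_big /=; apply: eq_bigr => i _.
  rewrite mulr_suml (big_ord_widen _ (fun j => a j * b (i - j)%N * c (n - i)%N) (ltn_ord i)).
  by rewrite big_mkcond /=; apply: eq_bigr => j _; rewrite ltnS; case: ifP; rewrite ?mulrA.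
apply: eq_bigr => j _; rewrite mulr_sumr.
rewrite (@big_ord_leq_shift _ (fun i => a j * (b (i - j)%N * c (n - i)%N))); last first.
  exact: ltnW (ltn_ord j).
rewrite subSn; last by rewrite -ltnS.
by apply: eq_bigr => l _; rewrite addKn subnDA.
Qed.

Lemma smulDl a b c : smul (sadd a b) c = sadd (smul a c) (smul b c).
Proof.
apply: functional_extensionality => n; rewrite /smul /sadd -big_split /=.
by apply: eq_bigr => i _; rewrite mulrDl.
Qed.

Lemma smulNl a c : smul (sopp a) c = sopp (smul a c).
Proof.
apply: functional_extensionality => n; rewrite /smul /sopp -sumrN.
by apply: eq_bigr => i _; rewrite mulNr.
Qed.

Lemma smulZl k a c : smul (sscale k a) c = sscale k (smul a c).
Proof.
apply: functional_extensionality => n; rewrite /smul /sscale mulr_sumr.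
by apply: eq_bigr => i _; rewrite mulrA.
Qed.

Lemma smulXl a c : smul (sX a) c = sX (smul a c).
Proof.
apply: functional_extensionality => -[|n]; rewrite /smul /sX big_ord_recl mul0r.
  by rewrite big_ord0 addr0.
by rewrite add0r; apply: eq_bigr => i _; rewrite subSS.
Qed.

Lemma smul1l c : smul (sone S) c = c.
Proof.
apply: functional_extensionality => n.
rewrite /smul /sone big_ord_recl /= mul1r subn0 big1 ?addr0 // => i _.
by rewrite mul0r.
Qed.

Lemma smulDr a b c : smul c (sadd a b) = sadd (smul c a) (smul c b).
Proof. by rewrite smulC smulDl !(smulC c). Qed.

Lemma smulZr k a c : smul c (sscale k a) = sscale k (smul c a).
Proof. by rewrite smulC smulZl smulC. Qed.

Lemma smulXr a c : smul c (sX a) = sX (smul c a).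
Proof. by rewrite smulC smulXl smulC. Qed.

Lemma smul1r c : smul c (sone S) = c.
Proof. by rewrite smulC smul1l. Qed.

Lemma sXD a b : sX (sadd a b) = sadd (sX a) (sX b).
Proof. by apply: functional_extensionality => -[|n]; rewrite /sX /sadd ?addr0. Qed.

Lemma sXZ k a : sX (sscale k a) = sscale k (sX a).
Proof. by apply: functional_extensionality => -[|n]; rewrite /sX /sscale ?mulr0. Qed.

Lemma size_sinv_upto a n : size (sinv_upto a n) = n.+1.
Proof. by elim: n => //= n IH; rewrite size_rcons IH. Qed.

Lemma nth_sinv_upto a n i : (i <= n)%N -> nth 0 (sinv_upto a n) i = sinv a i.
Proof.
elim: n => [|n IH]; first by rewrite leqn0 => /eqP ->.
rewrite leq_eqVlt => /predU1P[-> //|]; rewrite ltnS => lin.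
by rewrite /= nth_rcons size_sinv_upto ltnS lin IH.
Qed.

Lemma sinvS a n : sinv a n.+1 = - \sum_(i < n.+1) a i.+1 * sinv a (n - i)%N.
Proof.
rewrite {1}/sinv /= nth_rcons size_sinv_upto ltnn eqxx; congr (- _).
by apply: eq_bigr => i _; rewrite nth_sinv_upto // leq_subr.
Qed.

Lemma smul_sinv a : a 0%N = 1 -> smul a (sinv a) = sone S.
Proof.
move=> a0; apply: functional_extensionality => -[|n]; rewrite /smul /sone big_ord_recl a0 mul1r.
  by rewrite big_ord0 addr0.
rewrite subn0 sinvS; under [X in _ + X]eq_bigr do rewrite /= subSS.
exact: addNr.
Qed.

Lemma iter_sX_coef k (a : nat -> S) j :
  iter k (@sX S) a j = if (k <= j)%N then a (j - k)%N else 0.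
Proof. by elim: k j => [|k IH] [|j] //=; rewrite ?subn0 ?IH. Qed.

Lemma smul_iter_sXr k (a b : nat -> S) : smul a (iter k (@sX S) b) = iter k (@sX S) (smul a b).
Proof. by elim: k => //= k IH; rewrite smulXr IH. Qed.

Lemma spow_X k : spow (sX (sone S)) k = iter k (@sX S) (sone S).
Proof. by elim: k => //= k IH; rewrite -IH smulXl smul1l. Qed.

Lemma spow_X_cX2_coef (c : S) j i :
  spow (sadd (sX (sone S)) (sX (sX (sscale c (sone S))))) j i =
  if (j <= i)%N then 'C(j, i - j)%:R * c ^+ (i - j) else 0.
Proof.
elim: j i => [|j IH] i.
  by rewrite /spow /= /sone subn0 bin0n; case: i => [|i] //=; rewrite ?mul0r ?mul1r.
rewrite /spow iterS -/(spow _ j) smulDl smulXl smul1l !smulXl smulZl smul1l.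
case: i => [|[|i]]; rewrite /sadd /sX /sscale /= ?addr0 //.
  by rewrite IH; case: j {IH} => [|j] //=; rewrite bin0 expr0.
rewrite !IH; have [le_ji|lt_ij] := leqP j i.
  have [t ->] : exists t, i = (j + t)%N by exists (i - j)%N; lia.
  have -> : (j <= (j + t).+1)%N by lia.
  have -> : (j < (j + t).+2)%N by lia.
  have -> : ((j + t).+1 - j = t.+1)%N by lia.
  have -> : ((j + t).+2 - j.+1 = t.+1)%N by lia.
  by rewrite addKn binS natrD exprS; ring.
have [->|ne] := eqVneq j i.+1; first by rewrite !ltnSn !subnn !bin0 !expr0 mulr0 addr0.
have -> : (j <= i.+1)%N = false by lia.
have -> : (j < i.+2)%N = false by lia.
by rewrite mulr0 addr0.
Qed.
End PowerSeries.

Section JacobiFractionPaths.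
Variable S : comRingType.
Variables (alpha beta : nat -> S) (T : nat -> nat -> S).
Hypothesis T0 : forall k, T 0 k = (k == 0)%:R.
Hypothesis TS : forall n k, T n.+1 k =
  (if k is k'.+1 then T n k' else 0) + alpha k.+1 * T n k + beta k.+1 * T n k.+1.

Section Convergent.
Variable m : nat.

Let G j := jfrac_tail alpha beta (m - j) j.+1.

Let GE j : (j < m)%N -> G j = sinv (sadd (sone S)
  (sopp (sadd (sX (sscale (alpha j.+1) (sone S))) (sX (sX (sscale (beta j.+1) (G j.+1))))))).
Proof. by move=> jm; rewrite /G -(subnSK jm). Qed.

Let G_fixpoint j : (j < m)%N -> G j = sadd (sone S)
  (sadd (sX (sscale (alpha j.+1) (G j))) (sX (sX (sscale (beta j.+1) (smul (G j.+1) (G j)))))).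
Proof.
move=> jm; pose D := sadd (sone S) (sopp (sadd (sX (sscale (alpha j.+1) (sone S)))
  (sX (sX (sscale (beta j.+1) (G j.+1)))))).
have /smul_sinv : D 0%N = 1 by rewrite /D /sadd /sopp /sone /sX /= addr0 subr0.
rewrite -GE // /D smulDl smul1l smulNl smulDl !smulXl !smulZl smul1l => DG.
apply: functional_extensionality => n.
by move/(congr1 (fun f => f n)): DG; rewrite /sadd /sopp => <-; rewrite subrK.
Qed.

(* G_j enumerates the weighted Motzkin paths of height < m
   from level 0 to level j; the fixpoint equations of the G_j turn into the
   last-step recurrence [P_fixpoint], which is the recurrence defining T. *)
Let P := fix P j := if j is j'.+1 then sX (smul (P j') (G j)) else G 0.

Let P_fixpoint j : (j < m)%N -> P j = sadd (if j is j'.+1 then sX (P j') else sone S)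
  (sadd (sX (sscale (alpha j.+1) (P j))) (sX (sscale (beta j.+1) (P j.+1)))).
Proof.
case: j => [|j] jm /=.
  by rewrite {1}(G_fixpoint jm) (smulC _ (G 1)) !sXZ.
rewrite {1}(G_fixpoint jm).
rewrite !(smulDr, smul1r, smulXr, smulZr, smulXl, smulZl, sXD, sXZ, smulA).
by rewrite (smulC _ (G j.+2)).
Qed.

Let P_coef n j : (n + j < m)%N -> P j n = T n j.
Proof.
elim: n j => [|n IH] j nm.
  by rewrite T0; case: j nm => [|j] nm //=; rewrite GE.
have jm : (j < m)%N by lia.
move: (congr1 (fun f => f n.+1) (P_fixpoint jm)); rewrite /sadd /sX /sscale /sone => ->.
rewrite TS addrA; congr (_ + _ * _ + _ * _); rewrite ?IH //; try lia.
by case: j nm {jm} => [|j] nm //=; rewrite IH //; lia.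
Qed.

Lemma jfrac_conv_coef n : (n < m)%N -> jfrac_conv alpha beta m n = T n 0.
Proof. by move=> nm; rewrite -P_coef ?addn0 //= /G subn0. Qed.
End Convergent.

Lemma is_Jfrac_path_recurrence : is_Jfrac alpha beta (fun n => T n 0).
Proof. by move=> n; exists n.+1 => m; exact: jfrac_conv_coef. Qed.
End JacobiFractionPaths.

Section Hermite.
Variables (S : comRingType) (a b : S).

Fixpoint hermite n : S :=
  match n with
  | 0 => 1
  | 1 => a
  | (m.+1 as n').+1 => a * hermite n' + m.+1%:R * b * hermite m
  end.

Lemma hermiteS n : hermite n.+1 = a * hermite n + n%:R * b * hermite n.-1.
Proof. by case: n => [|n] //=; rewrite mul0r mul0r addr0 mulr1. Qed.

Lemma binomial_hermite_recurrence n k :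
  let T n k := 'C(n, k)%:R * hermite (n - k) in
  T n.+1 k = (if k is k'.+1 then T n k' else 0) + a * T n k + k.+1%:R * b * T n k.+1.
Proof.
move=> T; rewrite /T; case: k => [|k].
  by rewrite !subn0 !bin0 bin1 subn1 hermiteS add0r; ring.
have [kn|nk] := ltnP k n; last first.
  have [->|nk'] := eqVneq k n.
    by rewrite !binn subnn !bin_small // !mul0r !mulr0 !addr0 subnn.
  by rewrite !bin_small ?mul0r ?mulr0 ?addr0 //; lia.
have [s ->] : exists s, n = (k.+1 + s)%N by exists (n - k.+1)%N; lia.
have -> : ((k.+1 + s).+1 - k.+1 = s.+1)%N by lia.
have -> : (k.+1 + s - k = s.+1)%N by lia.
have -> : (k.+1 + s - k.+1 = s)%N by lia.
have -> : (k.+1 + s - k.+2 = s.-1)%N by lia.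
have binE : k.+2%:R * 'C(k.+1 + s, k.+2)%:R = s%:R * 'C(k.+1 + s, k.+1)%:R :> S.
  by rewrite -!natrM mul_bin_left; congr (_ * _)%:R; lia.
rewrite binS natrD hermiteS.
have -> : k.+2%:R * b * ('C(k.+1 + s, k.+2)%:R * hermite s.-1) =
          b * hermite s.-1 * (k.+2%:R * 'C(k.+1 + s, k.+2)%:R) by ring.
by rewrite binE; ring.
Qed.

Lemma is_Jfrac_hermite : is_Jfrac (fun _ => a) (fun k => k%:R * b) hermite.
Proof.
have -> : hermite = fun n => 'C(n, 0)%:R * hermite (n - 0).
  by apply: functional_extensionality => n; rewrite bin0 subn0 mul1r.
apply: (@is_Jfrac_path_recurrence _ _ _ (fun n k => 'C(n, k)%:R * hermite (n - k))) => [k|n k].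
  by rewrite bin0n sub0n mulr1.
exact: binomial_hermite_recurrence.
Qed.
End Hermite.

Section Char0.
Variable R : fieldType.
Hypothesis charR0 : [pchar R] =i pred0.

Lemma char0_natr_eq0 n : (n%:R == 0 :> R) = (n == 0)%N.
Proof. by rewrite ((pcharf0P R).1 charR0). Qed.

Lemma natr_fact_neq0 n : n`!%:R != 0 :> R.
Proof. by rewrite char0_natr_eq0 -lt0n fact_gt0. Qed.

Lemma natr2X_neq0 i : 2%:R ^+ i != 0 :> R.
Proof. by rewrite expf_neq0 // char0_natr_eq0. Qed.

Lemma natr_bin m n : (m <= n)%N ->
  'C(n, m)%:R = n`!%:R / (m`!%:R * (n - m)`!%:R) :> R.
Proof.
by move=> le_mn; rewrite -(bin_fact le_mn) !natrM; field; rewrite !natr_fact_neq0.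
Qed.
End Char0.

Section HermiteExplicit.
Variables (R : fieldType) (A : comAlgType R) (a b : A).
Hypothesis charR0 : [pchar R] =i pred0.

Definition hermite_coef (n i : nat) : R :=
  n`!%:R / (i`!%:R * (n - 2 * i)`!%:R * 2%:R ^+ i).

Lemma hermite_coef0 n : hermite_coef n 0 = 1.
Proof.
by rewrite /hermite_coef muln0 subn0 fact0 !mul1r expr0 mulr1 divff ?(natr_fact_neq0 charR0).
Qed.

Lemma hermite_coefSS n i : (2 * i < n)%N ->
  hermite_coef n.+2 i.+1 = hermite_coef n.+1 i.+1 + n.+1%:R * hermite_coef n i.
Proof.
move=> lt_2i_n; have [q ->] : exists q, n = (2 * i + q.+1)%N by exists (n - (2 * i).+1)%N; lia.
rewrite /hermite_coef.
have -> : ((2 * i + q.+1).+2 - 2 * i.+1 = q.+1)%N by lia.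
have -> : ((2 * i + q.+1).+1 - 2 * i.+1 = q)%N by lia.
have -> : (2 * i + q.+1 - 2 * i = q.+1)%N by lia.
rewrite !factS !natrM exprS; field.
by rewrite (natr2X_neq0 charR0) !(addrC 1) !natr1 !(natr_fact_neq0 charR0) //
  !(char0_natr_eq0 charR0).
Qed.

Lemma hermite_coef_double i :
  hermite_coef (2 * i).+2 i.+1 = (2 * i).+1%:R * hermite_coef (2 * i) i.
Proof.
rewrite /hermite_coef.
have -> : ((2 * i).+2 - 2 * i.+1 = 0)%N by lia.
rewrite subnn !factS !natrM exprS fact0 mulr1; field.
by rewrite (natr2X_neq0 charR0) !(addrC 1) !natr1 !(natr_fact_neq0 charR0) //
  !(char0_natr_eq0 charR0).
Qed.

Let term n i := if (2 * i <= n)%N then hermite_coef n i *: (b ^+ i * a ^+ (n - 2 * i)) else 0.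

Let termSS n i : term n.+2 i.+1 = a * term n.+1 i.+1 + n.+1%:R * b * term n i.
Proof.
rewrite /term; have [lt_2i_n|] := ltnP (2 * i) n.
  have [q ->] : exists q, n = (2 * i + q.+1)%N by exists (n - (2 * i).+1)%N; lia.
  rewrite hermite_coefSS; last by lia.
  have -> : (2 * i.+1 <= (2 * i + q.+1).+2)%N by lia.
  have -> : (2 * i.+1 <= (2 * i + q.+1).+1)%N by lia.
  have -> : (2 * i <= 2 * i + q.+1)%N by lia.
  have -> : ((2 * i + q.+1).+2 - 2 * i.+1 = q.+1)%N by lia.
  have -> : ((2 * i + q.+1).+1 - 2 * i.+1 = q)%N by lia.
  have -> : (2 * i + q.+1 - 2 * i = q.+1)%N by lia.
  by rewrite scalerDl -scalerA scaler_nat -!(mulr_algl _ (_ * _)) !exprS; ring.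
rewrite leq_eqVlt => /predU1P[->|lt_n_2i].
  rewrite hermite_coef_double.
  have -> : (2 * i.+1 <= (2 * i).+2)%N by lia.
  have -> : (2 * i.+1 <= (2 * i).+1)%N = false by lia.
  have -> : ((2 * i).+2 - 2 * i.+1 = 0)%N by lia.
  by rewrite leqnn subnn -scalerA scaler_nat -!(mulr_algl _ (_ * _)) !exprS; ring.
have -> : (2 * i.+1 <= n.+2)%N = false by lia.
have -> : (2 * i.+1 <= n.+1)%N = false by lia.
have -> : (2 * i <= n)%N = false by lia.
by rewrite !mulr0 addr0.
Qed.

Let hermite_sum_rec n : \sum_(i < n.+3) term n.+2 i =
  a * \sum_(i < n.+2) term n.+1 i + n.+1%:R * b * \sum_(i < n.+1) term n i.
Proof.
rewrite big_ord_recl [X in a * X]big_ord_recl mulrDr -addrA; congr (_ + _).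
  by rewrite /term !leq0n !muln0 !subn0 !hermite_coef0 !scale1r !mul1r exprS.
rewrite big_ord_recr /= [term _ (bump 0 _)]ifF ?addr0; last by rewrite /bump; lia.
rewrite !mulr_sumr -big_split /=.
by apply: eq_bigr => i _; rewrite /bump leq0n add1n termSS.
Qed.

Lemma hermite_explicit n : hermite a b n =
  \sum_(i < n.+1 | (2 * i <= n)%N) hermite_coef n i *: (b ^+ i * a ^+ (n - 2 * i)).
Proof.
rewrite big_mkcond /=; rewrite -/(\sum_(i < n.+1) term n i).
suff: hermite a b n = \sum_(i < n.+1) term n i /\ hermite a b n.+1 = \sum_(i < n.+2) term n.+1 i.
  by case.
elim: n => [|n [IHn IHn1]].
  by rewrite !big_ord_recl !big_ord0 /term /= !muln0 !subn0 !hermite_coef0 !scale1r !mul1r !addr0.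
by split=> //; rewrite hermite_sum_rec -IHn -IHn1.
Qed.
End HermiteExplicit.
Arguments hermite_coef {R} n i.

Lemma rev_pascal_gf (R : comRingType) (M : nat -> R) n :
  \sum_(k < n.+1) (\sum_(j < n.+1) M j * 'C(j, n - k)%:R)%:P * 'X ^+ k =
  \sum_(j < n.+1) (M j)%:P * (('X + 1) ^+ j * 'X ^+ (n - j)).
Proof.
under eq_bigr do rewrite rmorph_sum mulr_suml.
rewrite exchange_big /=; apply: eq_bigr => j _.
under eq_bigr do rewrite polyCM polyC_natr -mulrA.
rewrite -mulr_sumr; congr (_ * _).
rewrite (reindex_inj rev_ord_inj) /= exprDn mulr_suml.
rewrite (big_ord_widen _ (fun i => 'X ^+ (j - i) * 1 ^+ i *+ 'C(j, i) * 'X ^+ (n - j)) (ltn_ord j)).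
rewrite [RHS]big_mkcond /=; apply: eq_bigr => k _.
rewrite subSS subKn; last by rewrite -ltnS.
case: ltnP => kj; last by rewrite bin_small // mul0r.
rewrite expr1n mulr1 [RHS]mulrnAl -exprD -[RHS]mulr_natl; congr (_ * 'X ^+ _).
by have := ltn_ord j; lia.
Qed.

Section ExponentialRiordan.
Variables (R : fieldType) (r : R).
Hypothesis charR0 : [pchar R] =i pred0.

Lemma eriordan_exp_x j k : eriordan (sexp R) (sx R) j k = 'C(j, k)%:R.
Proof.
have -> : sx R = sX (sone R) by apply: functional_extensionality => -[|[|i]].
rewrite /eriordan spow_X smul_iter_sXr smul1r iter_sX_coef /sexp.
case: leqP => kj; last by rewrite bin_small // mulr0.
by rewrite (natr_bin charR0) //; field; rewrite !(natr_fact_neq0 charR0).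
Qed.

Lemma rev_eF_gfE n : rev_eF_gf r n =
  \sum_(j < n.+1) (eriordan (sexp R) (sxr r) n j)%:P * (('X + 1) ^+ j * 'X ^+ (n - j)).
Proof.
rewrite -rev_pascal_gf; apply: eq_bigr => k _; congr (_%:P * _).
by apply: eq_bigr => j _; rewrite eriordan_exp_x.
Qed.

Lemma eriordan_exp_sxr n j : (j <= n)%N -> eriordan (sexp R) (sxr r) n j =
  n`!%:R / j`!%:R * \sum_(i < n.+1 - j) ('C(j, i)%:R * (r / 2%:R) ^+ i / (n - (j + i))`!%:R).
Proof.
have -> : sxr r = sadd (sX (sone R)) (sX (sX (sscale (r / 2%:R) (sone R)))).
  by apply: functional_extensionality => -[|[|[|i]]]; rewrite /sxr /sadd /sX /sscale /sone /=; ring.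
move=> le_jn; rewrite /eriordan smulC /smul; congr (_ * _).
under eq_bigr => i _ do rewrite spow_X_cX2_coef /sexp (fun_if (fun x => x * _)) mul0r.
rewrite (@big_ord_leq_shift _ (fun i => 'C(j, i - j)%:R * (r / 2%:R) ^+ (i - j) / (n - i)`!%:R));
  last by lia.
by apply: eq_bigr => i _; rewrite addKn.
Qed.
End ExponentialRiordan.

Section RevEFHermite.
Variables (R : fieldType) (r : R).
Hypothesis charR0 : [pchar R] =i pred0.

Let F n j i : {poly R} :=
  (n`!%:R / j`!%:R * ('C(j, i)%:R * (r / 2%:R) ^+ i / (n - (j + i))`!%:R))%:P *
  (('X + 1) ^+ j * 'X ^+ (n - j)).

Let F_small n j i : (j < i)%N -> F n j i = 0.
Proof. by move=> lt_ji; rewrite /F bin_small // !mul0r mulr0 rmorph0 mul0r. Qed.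

Let F_hermite_term n i p : (2 * i + p <= n)%N -> F n (i + p) i =
  hermite_coef n i *: ((r *: ('X * ('X + 1))) ^+ i *
                       ('X ^+ (n - 2 * i - p) * ('X + 1) ^+ p *+ 'C(n - 2 * i, p))).
Proof.
move=> le_n; have [q ->] : exists q, n = (2 * i + p + q)%N by exists (n - (2 * i + p))%N; lia.
rewrite /F /hermite_coef.
have -> : (2 * i + p + q - (i + p + i) = q)%N by lia.
have -> : (2 * i + p + q - (i + p) = i + q)%N by lia.
have -> : (2 * i + p + q - 2 * i = p + q)%N by lia.
have -> : (p + q - p = q)%N by lia.
have coefE : (2 * i + p + q)`!%:R / (i + p)`!%:R * ('C(i + p, i)%:R * (r / 2%:R) ^+ i / q`!%:R) =
    (2 * i + p + q)`!%:R / (i`!%:R * (p + q)`!%:R * 2%:R ^+ i) * r ^+ i * 'C(p + q, p)%:R :> R.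
  rewrite !(natr_bin charR0) ?leq_addr //.
  have -> : (i + p - i = p)%N by lia.
  have -> : (p + q - p = q)%N by lia.
  rewrite expr_div_n; field.
  by rewrite !(natr_fact_neq0 charR0) // (natr2X_neq0 charR0).
rewrite coefE exprZn -scalerA -!mul_polyC -mulr_natl !polyCM !polyC_natr.
by rewrite !exprD !exprMn; ring.
Qed.

Lemma rev_eF_gf_hermite n :
  rev_eF_gf r n = hermite (2%:R *: 'X + 1) (r *: ('X * ('X + 1))) n.
Proof.
have := @hermite_explicit _ {poly R} (2%:R *: 'X + 1) (r *: ('X * ('X + 1))) charR0 n.
move=> /= ->; rewrite (rev_eF_gfE r charR0) [RHS]big_mkcond /=.
rewrite (eq_bigr (fun j : 'I_n.+1 =>
  \sum_(i < n.+1) if (i < n.+1 - j)%N then F n j i else 0)); last first.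
  move=> j _; rewrite eriordan_exp_sxr; last by rewrite -ltnS.
  rewrite mulr_sumr rmorph_sum mulr_suml.
  by rewrite (big_ord_widen _ (F n j) (leq_subr j n.+1)) big_mkcond.
rewrite exchange_big /=; apply: eq_bigr => i _.
rewrite (eq_bigr (fun j : 'I_n.+1 =>
  if (i <= j)%N then if (i < n.+1 - j)%N then F n j i else 0 else 0)); last first.
  by move=> j _; case: (leqP i j) => // lt_ji; rewrite F_small // if_same.
rewrite (@big_ord_leq_shift _ (fun j => if (i < n.+1 - j)%N then F n j i else 0)); last exact: ltnW.
(* With j = i + p, the sum over p is the binomial expansion of (y + (y+1))^(n-2i). *)
case: leqP => le_2i_n; last by rewrite big1 // => p _; rewrite ifF //; lia.
have -> : 2%:R *: 'X + 1 = 'X + ('X + 1) :> {poly R} by rewrite scaler_nat mulr2n addrA.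
rewrite exprDn mulr_sumr scaler_sumr.
have le_widen : ((n - 2 * i).+1 <= n.+1 - i)%N by lia.
rewrite [RHS](big_ord_widen _ (fun p => hermite_coef n i *: ((r *: ('X * ('X + 1))) ^+ i *
  ('X ^+ (n - 2 * i - p) * ('X + 1) ^+ p *+ 'C(n - 2 * i, p)))) le_widen).
rewrite [RHS]big_mkcond /=; apply: eq_bigr => p _.
have -> : (i < n.+1 - (i + p))%N = (p < (n - 2 * i).+1)%N by apply/idP/idP; lia.
by case: ifP => // lt_p; rewrite F_hermite_term //; lia.
Qed.
End RevEFHermite.

Theorem proposition3 (R : fieldType) (hR : [pchar R] =i pred0) (r : R) :
  is_Jfrac (fun _ => 2%:R *: 'X + 1 : {poly R})
           (fun n => (n%:R * r) *: ('X * ('X + 1)) : {poly R})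
           (rev_eF_gf r).
Proof.
have -> : rev_eF_gf r = hermite (2%:R *: 'X + 1) (r *: ('X * ('X + 1))).
  by apply: functional_extensionality => n; exact: rev_eF_gf_hermite.
have -> : (fun n => (n%:R * r) *: ('X * ('X + 1))) =
          (fun n => n%:R * (r *: ('X * ('X + 1))) : {poly R}).
  by apply: functional_extensionality => n; rewrite -scalerA scaler_nat mulr_natl.
exact: is_Jfrac_hermite.
Qed.
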